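(* Let $B^{H,K}$ be a bifractional Brownian motion with $0<H\le1/2$, $0<K\le1$ and $2HK=1/2$. Then for every $T>0$, $W=B^{H,K}$ satisfies conditions (i)–(iv) below on $[0,T]$ (with constants depending on $T$).
   Context: The bifractional Brownian motion $B^{H,K}=\{B^{H,K}_t,t\ge0\}$, $H\in(0,1)$, $K\in(0,1]$, is the centered Gaussian process with $\mathbb E[B^{H,K}_tB^{H,K}_s]=2^{-K}\big[(t^{2H}+s^{2H})^K-|t-s|^{2HK}\big]$. Conditions for a centered Gaussian process $W$ on $[0,T]$: (i) $\mathbb E[(W_t-W_{t-s})^2]\le C_1 s^{1/2}$ for $0<s\le t\le T$. (ii) There are $1<\alpha\le3/2$, $\beta=\frac32-\alpha$ such that for $s>0$, $2s\le r,t\le T$, $|t-r|\ge2s$: $|\mathbb E[(W_t-W_{t-s})(W_r-W_{r-s})]|\le C_1s^2|t-r|^{-\alpha}(t\wedge r-s)^{-\beta}+C_1s^2|t-r|^{-3/2}$. (iii) For $0<t\le T$, $0<s\le r\le T$: $|\mathbb E[W_t(W_{r+s}-2W_r+W_{r-s})]|\le C_2s^{1/2}$ if $r<2s$ or $|t-r|<2s$, and $\le C_2s^2((r-s)^{-3/2}+|t-r|^{-3/2})$ if $r\ge2s$ and $|t-r|\ge2s$. (iv) For $0<s\le t\le T-s$: $|\mathbb E[W_t(W_{t+s}-W_{t-s})]|\le C_3s^{1/2}$ if $t<2s$ and $\le C_3s(t-s)^{-1/2}$ if $t\ge2s$; for $0<s\le r\le T$: $|\mathbb E[W_r(W_{t+s}-W_{t-s})]|\le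 C_3s^{1/2}$ if $t<2s$ or $|t-r|<2s$, and $\le C_3s(t-s)^{-1/2}+C_3s|t-r|^{-1/2}$ if $t\ge2s$ and $|t-r|\ge2s$; and for $t>2s$: $|\mathbb E[W_s(W_t-W_{t-s})]|\le C_3s^{1/2+\gamma}(t-2s)^{-\gamma}$ for some $\gamma>0$. *)

From Stdlib Require Import Reals Lra.
Open Scope R_scope.

(* Real power x^a for x >= 0, with the convention 0^a = 0 (only used with
   x >= 0; with a > 0 this is the usual power; Stdlib's Rpower 0 a = 1
   would be wrong, hence the guard). *)
Definition rpow (x a : R) : R := if Rle_dec x 0 then 0 else Rpower x a.

Definition bfbm_cov (H K : R) (t s : R) : R :=
  Rpower 2 (- K) *
  (rpow (rpow t (2 * H) + rpow s (2 * H)) K - rpow (Rabs (t - s)) (2 * H * K)).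

(* Second moments of increments of a centered process W with covariance
   Rc(t,s) = E[W_t W_s], expanded by bilinearity of expectation. *)

(* E[(W_t - W_{t-s})(W_r - W_{r-s})] *)
Definition incr_cov (Rc : R -> R -> R) (s t r : R) : R :=
  Rc t r - Rc t (r - s) - Rc (t - s) r + Rc (t - s) (r - s).

(* E[W_t (W_{r+s} - 2 W_r + W_{r-s})] *)
Definition second_diff_cov (Rc : R -> R -> R) (s t r : R) : R :=
  Rc t (r + s) - 2 * Rc t r + Rc t (r - s).

(* E[W_u (W_{t+s} - W_{t-s})] *)
Definition sym_diff_cov (Rc : R -> R -> R) (s u t : R) : R :=
  Rc u (t + s) - Rc u (t - s).

(* E[W_u (W_t - W_{t-s})] *)
Definition back_diff_cov (Rc : R -> R -> R) (s u t : R) : R :=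
  Rc u t - Rc u (t - s).

Definition cond_i (T : R) (Rc : R -> R -> R) : Prop :=
  exists C1 : R, forall s t : R, 0 < s -> s <= t -> t <= T ->
    incr_cov Rc s t t <= C1 * rpow s (1/2).

Definition cond_ii (T : R) (Rc : R -> R -> R) : Prop :=
  exists C1 alpha : R, 1 < alpha /\ alpha <= 3/2 /\
    let beta := 3/2 - alpha in
    forall s t r : R, 0 < s -> 2 * s <= r -> r <= T -> 2 * s <= t -> t <= T ->
      2 * s <= Rabs (t - r) ->
      Rabs (incr_cov Rc s t r) <=
        C1 * s ^ 2 * rpow (Rabs (t - r)) (- alpha) * rpow (Rmin t r - s) (- beta)
        + C1 * s ^ 2 * rpow (Rabs (t - r)) (- (3/2)).

Definition cond_iii (T : R) (Rc : R -> R -> R) : Prop :=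
  exists C2 : R, forall t s r : R, 0 < t -> t <= T -> 0 < s -> s <= r -> r <= T ->
    ((r < 2 * s \/ Rabs (t - r) < 2 * s) ->
       Rabs (second_diff_cov Rc s t r) <= C2 * rpow s (1/2)) /\
    ((2 * s <= r /\ 2 * s <= Rabs (t - r)) ->
       Rabs (second_diff_cov Rc s t r) <=
         C2 * s ^ 2 * (rpow (r - s) (- (3/2)) + rpow (Rabs (t - r)) (- (3/2)))).

Definition cond_iv (T : R) (Rc : R -> R -> R) : Prop :=
  exists C3 gamma : R, 0 < gamma /\
    (forall s t : R, 0 < s -> s <= t -> t <= T - s ->
       (t < 2 * s -> Rabs (sym_diff_cov Rc s t t) <= C3 * rpow s (1/2)) /\
       (2 * s <= t -> Rabs (sym_diff_cov Rc s t t) <= C3 * s * rpow (t - s) (- (1/2)))) /\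
    (forall s r t : R, 0 < s -> s <= r -> r <= T -> s <= t -> t <= T ->
       ((t < 2 * s \/ Rabs (t - r) < 2 * s) ->
          Rabs (sym_diff_cov Rc s r t) <= C3 * rpow s (1/2)) /\
       ((2 * s <= t /\ 2 * s <= Rabs (t - r)) ->
          Rabs (sym_diff_cov Rc s r t) <=
            C3 * s * rpow (t - s) (- (1/2)) + C3 * s * rpow (Rabs (t - r)) (- (1/2)))) /\
    (forall s t : R, 0 < s -> 2 * s < t -> t <= T ->
       Rabs (back_diff_cov Rc s s t) <= C3 * rpow s (1/2 + gamma) * rpow (t - 2 * s) (- gamma)).

From Stdlib Require Import Reals Lra Psatz.
Open Scope R_scope.

(* With p = 2H the covariance splits as
       R(x, y) = 2^(-K) (G(x, y) - D(x, y)),   G(x, y) = (x^p + y^p)^K,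
                                               D(x, y) = |x - y|^(1/2),
   and 0 < 2^(-K) <= 1, so every functional in (i)-(iv) is bounded by the sum of
   the same functional applied to G and to D.  Two regimes occur:
   - near the diagonal or the origin, R(x, .) is 1/2-Hoelder with constant 2
     (G by subadditivity of concave powers, D by the Hoelder continuity of the
     square root), which gives (i) and the "s^(1/2)" cases of (iii)-(iv);
   - away from them, first, second and mixed differences are bounded by the
     mean value theorem, using derivative bounds on u |-> (u^p + c)^K in which
     the exponents combine through pK = 1/2, and on the square root. *)

(** * Real powers *)

Lemma Rpower_pos x a : 0 < Rpower x a.
Proof. apply exp_pos. Qed.

Lemma rpow_pos_eq x a : 0 < x -> rpow x a = Rpower x a.
Proof. intros Hx; unfold rpow; destruct (Rle_dec x 0); lra. Qed.

Lemma rpow_nonpos x a : x <= 0 -> rpow x a = 0.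
Proof. intros Hx; unfold rpow; destruct (Rle_dec x 0); lra. Qed.

Lemma rpow_nonneg x a : 0 <= rpow x a.
Proof. unfold rpow; destruct (Rle_dec x 0); [lra | left; apply Rpower_pos]. Qed.

Lemma Rpower_le_neg a b e : e <= 0 -> 0 < a <= b -> Rpower b e <= Rpower a e.
Proof.
  intros He [Ha Hab]; unfold Rpower.
  assert (Hln : ln a <= ln b).
  { destruct Hab as [Hlt | ->]; [left; apply ln_increasing |]; lra. }
  destruct (Req_dec (e * ln b) (e * ln a)) as [Heq | Hne]; [rewrite Heq; lra |].
  left; apply exp_increasing; nra.
Qed.

Lemma rpow_le_pos c a b : 0 <= c -> 0 <= a <= b -> rpow a c <= rpow b c.
Proof.
  intros Hc [Ha Hab]. destruct (Rle_dec a 0).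
  - rewrite (rpow_nonpos a) by lra; apply rpow_nonneg.
  - rewrite !rpow_pos_eq by lra; apply Rle_Rpower_l; lra.
Qed.

Lemma rpow_rpow z p K : 0 <= z -> rpow (rpow z p) K = rpow z (p * K).
Proof.
  intros Hz. destruct (Rle_dec z 0).
  - rewrite (rpow_nonpos z p), (rpow_nonpos z), rpow_nonpos; lra.
  - rewrite (rpow_pos_eq z p), rpow_pos_eq, rpow_pos_eq by (apply Rpower_pos || lra).
    apply Rpower_mult.
Qed.

Lemma le_Rpower_unit_interval z q : 0 < z <= 1 -> q <= 1 -> z <= Rpower z q.
Proof.
  intros [Hz Hz1] Hq. rewrite <- (Rpower_1 z) at 1 by lra. unfold Rpower.
  assert (Hln : ln z <= 0).
  { rewrite <- ln_1. destruct Hz1 as [Hlt | ->]; [left; apply ln_increasing |]; lra. }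
  destruct (Req_dec (1 * ln z) (q * ln z)) as [Heq | Hne]; [rewrite Heq; lra |].
  left; apply exp_increasing; nra.
Qed.

Lemma rpow_subadditive q a b : 0 < q <= 1 -> 0 <= a -> 0 <= b ->
  rpow (a + b) q <= rpow a q + rpow b q.
Proof.
  intros Hq Ha Hb.
  destruct (Req_dec a 0) as [-> | Ha0].
  { rewrite Rplus_0_l, (rpow_nonpos 0) by lra; lra. }
  destruct (Req_dec b 0) as [-> | Hb0].
  { rewrite Rplus_0_r, (rpow_nonpos 0) by lra; lra. }
  rewrite !rpow_pos_eq by lra.
  (* write a = z (a + b), b = w (a + b) with z + w = 1 *)
  set (z := a / (a + b)); set (w := b / (a + b)).
  assert (Hz : 0 < z <= 1).
  { unfold z; split; [apply Rdiv_lt_0_compat; lra |].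
    apply Rmult_le_reg_r with (a + b); [lra |]; field_simplify; lra. }
  assert (Hw : 0 < w <= 1).
  { unfold w; split; [apply Rdiv_lt_0_compat; lra |].
    apply Rmult_le_reg_r with (a + b); [lra |]; field_simplify; lra. }
  assert (Hzw : z + w = 1) by (unfold z, w; field; lra).
  assert (Ea : Rpower a q = Rpower z q * Rpower (a + b) q).
  { rewrite Rpower_mult_distr by lra; f_equal; unfold z; field; lra. }
  assert (Eb : Rpower b q = Rpower w q * Rpower (a + b) q).
  { rewrite Rpower_mult_distr by lra; f_equal; unfold w; field; lra. }
  rewrite Ea, Eb.
  pose proof (le_Rpower_unit_interval z q Hz ltac:(lra)).
  pose proof (le_Rpower_unit_interval w q Hw ltac:(lra)).
  pose proof (Rpower_pos (a + b) q). nra.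
Qed.

Lemma rpow_holder q a b : 0 < q <= 1 -> 0 <= a -> 0 <= b ->
  Rabs (rpow a q - rpow b q) <= rpow (Rabs (a - b)) q.
Proof.
  intros Hq Ha Hb.
  assert (Hgen : forall x y, 0 <= y <= x -> 0 <= rpow x q - rpow y q <= rpow (x - y) q).
  { intros x y Hxy. split.
    - pose proof (rpow_le_pos q y x ltac:(lra) ltac:(lra)); lra.
    - pose proof (rpow_subadditive q y (x - y) Hq ltac:(lra) ltac:(lra)) as Hs.
      replace (y + (x - y)) with x in Hs by ring; lra. }
  destruct (Rle_dec b a).
  - rewrite !Rabs_right by (pose proof (Hgen a b); lra). apply Hgen; lra.
  - rewrite Rabs_left1, (Rabs_left1 (a - b)) by (pose proof (Hgen b a); lra).
    replace (- (a - b)) with (b - a) by ring. pose proof (Hgen b a); lra.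
Qed.

(** * Difference quotients controlled by derivatives *)

Lemma mvt_bound f f' a b M : a <= b ->
  (forall c, a <= c <= b -> derivable_pt_lim f c (f' c)) ->
  (forall c, a <= c <= b -> Rabs (f' c) <= M) ->
  Rabs (f b - f a) <= M * (b - a).
Proof.
  intros Hab Hd HM. destruct (Req_dec a b) as [<- | Hne].
  - rewrite Rminus_diag, Rabs_R0, Rminus_diag, Rmult_0_r; lra.
  - destruct (MVT_cor2 f f' a b ltac:(lra) Hd) as (c & Hc & Hcab).
    rewrite Hc, Rabs_mult, (Rabs_right (b - a)) by lra.
    apply Rmult_le_compat_r; [lra | apply HM; lra].
Qed.

Lemma first_diff_power_bound f f' a b M e : 0 < a <= b -> e <= 0 ->
  (forall c, a <= c <= b -> derivable_pt_lim f c (f' c)) ->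
  (forall c, a <= c <= b -> Rabs (f' c) <= M * Rpower c e) ->
  Rabs (f b - f a) <= M * Rpower a e * (b - a).
Proof.
  intros Hab He Hd HM. apply (mvt_bound f f'); [lra | exact Hd |].
  intros c Hc. eapply Rle_trans; [apply HM, Hc |].
  assert (HM0 : 0 <= M).
  { pose proof (HM c Hc); pose proof (Rabs_pos (f' c)); pose proof (Rpower_pos c e); nra. }
  apply Rmult_le_compat_l; [exact HM0 | apply Rpower_le_neg; lra].
Qed.

Lemma derivable_pt_lim_shift h a x l : derivable_pt_lim h (a + x) l ->
  derivable_pt_lim (fun y => h (a + y)) x l.
Proof.
  intros Hd. replace l with (l * (0 + 1)) by ring.
  apply (derivable_pt_lim_comp (fun y => a + y) h x (0 + 1) l); [| exact Hd].
  apply (derivable_pt_lim_plus (fct_cte a) id);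
    [apply derivable_pt_lim_const | apply derivable_pt_lim_id].
Qed.

Lemma derivable_pt_lim_reflect h a x l : derivable_pt_lim h (a - x) l ->
  derivable_pt_lim (fun y => h (a - y)) x (- l).
Proof.
  intros Hd. replace (- l) with (l * (0 - 1)) by ring.
  apply (derivable_pt_lim_comp (fun y => a - y) h x (0 - 1) l); [| exact Hd].
  apply (derivable_pt_lim_minus (fct_cte a) id);
    [apply derivable_pt_lim_const | apply derivable_pt_lim_id].
Qed.

Lemma second_diff_bound h h1 h2 a s M : 0 < s ->
  (forall x, a - s <= x <= a + s -> derivable_pt_lim h x (h1 x)) ->
  (forall x, a - s <= x <= a + s -> derivable_pt_lim h1 x (h2 x)) ->
  (forall x, a - s <= x <= a + s -> Rabs (h2 x) <= M) ->
  Rabs (h (a + s) - 2 * h a + h (a - s)) <= 2 * M * s ^ 2.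
Proof.
  intros Hs D1 D2 HM.
  assert (HM0 : 0 <= M) by (pose proof (HM a ltac:(lra)); pose proof (Rabs_pos (h2 a)); lra).
  (* apply the mean value inequality to the even part u |-> h(a+u) + h(a-u) on [0, s] *)
  set (k := fun u => h (a + u) + h (a - u)).
  replace (h (a + s) - 2 * h a + h (a - s)) with (k s - k 0)
    by (unfold k; rewrite Rplus_0_r, Rminus_0_r; ring).
  replace (2 * M * s ^ 2) with (2 * M * s * (s - 0)) by ring.
  apply (mvt_bound k (fun u => h1 (a + u) - h1 (a - u))); [lra | |].
  - intros c Hc. apply (derivable_pt_lim_plus (fun u => h (a + u)) (fun u => h (a - u))).
    + apply derivable_pt_lim_shift, D1; lra.
    + apply derivable_pt_lim_reflect, D1; lra.
  - intros c Hc.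
    pose proof (mvt_bound h1 h2 (a - c) (a + c) M ltac:(lra)
       ltac:(intros; apply D2; lra) ltac:(intros; apply HM; lra)) as Hc1.
    eapply Rle_trans; [exact Hc1 | nra].
Qed.

Lemma second_diff_power_bound h h1 h2 a s M e : 0 < s < a -> e <= 0 ->
  (forall x, a - s <= x <= a + s -> derivable_pt_lim h x (h1 x)) ->
  (forall x, a - s <= x <= a + s -> derivable_pt_lim h1 x (h2 x)) ->
  (forall x, a - s <= x <= a + s -> Rabs (h2 x) <= M * Rpower x e) ->
  Rabs (h (a + s) - 2 * h a + h (a - s)) <= 2 * M * Rpower (a - s) e * s ^ 2.
Proof.
  intros Has He D1 D2 HM.
  replace (2 * M * Rpower (a - s) e * s ^ 2) with (2 * (M * Rpower (a - s) e) * s ^ 2) by ring.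
  apply (second_diff_bound h h1 h2); [lra | exact D1 | exact D2 |].
  intros x Hx. eapply Rle_trans; [apply HM, Hx |].
  assert (HM0 : 0 <= M).
  { pose proof (HM x Hx); pose proof (Rabs_pos (h2 x)); pose proof (Rpower_pos x e); nra. }
  apply Rmult_le_compat_l; [exact HM0 | apply Rpower_le_neg; lra].
Qed.

Lemma mixed_diff_bound F F1 F12 t r s M : 0 < s ->
  (forall x y, t - s <= x <= t -> r - s <= y <= r ->
     derivable_pt_lim (fun x => F x y) x (F1 x y)) ->
  (forall x y, t - s <= x <= t -> r - s <= y <= r ->
     derivable_pt_lim (fun y => F1 x y) y (F12 x y)) ->
  (forall x y, t - s <= x <= t -> r - s <= y <= r -> Rabs (F12 x y) <= M) ->
  Rabs (F t r - F t (r - s) - F (t - s) r + F (t - s) (r - s)) <= M * s ^ 2.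
Proof.
  intros Hs D1 D2 HM.
  set (k := fun x => F x r - F x (r - s)).
  replace (F t r - F t (r - s) - F (t - s) r + F (t - s) (r - s)) with (k t - k (t - s))
    by (unfold k; ring).
  replace (M * s ^ 2) with (M * s * (t - (t - s))) by ring.
  apply (mvt_bound k (fun x => F1 x r - F1 x (r - s))); [lra | |].
  - intros c Hc. apply (derivable_pt_lim_minus (fun x => F x r) (fun x => F x (r - s)));
      apply D1; lra.
  - intros c Hc. replace (M * s) with (M * (r - (r - s))) by ring.
    apply (mvt_bound (fun y => F1 c y) (fun y => F12 c y)); [lra | |];
      intros; [apply D2 | apply HM]; lra.
Qed.

Lemma Rpower_half_bound e y z : e <= 0 -> 0 < y -> y / 2 <= z ->
  Rpower z e <= Rpower 2 (- e) * Rpower y e.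
Proof.
  intros He Hy Hz. eapply Rle_trans; [apply (Rpower_le_neg (y / 2) z e); lra |].
  replace (y / 2) with (/ 2 * y) by field.
  rewrite <- Rpower_mult_distr by lra.
  apply Rmult_le_compat_r; [left; apply Rpower_pos |].
  unfold Rpower; rewrite ln_Rinv by lra. right; f_equal; ring.
Qed.

(** * The powered sum (u^p + c)^e and its derivatives *)

Definition powsum p c e u := Rpower (Rpower u p + c) e.

Lemma derivable_pt_lim_eq f x l l' :
  derivable_pt_lim f x l -> l = l' -> derivable_pt_lim f x l'.
Proof. intros Hd <-; exact Hd. Qed.

Lemma derivable_powsum p c e u : 0 < u -> 0 <= c ->
  derivable_pt_lim (powsum p c e) u (e * powsum p c (e - 1) u * (p * Rpower u (p - 1))).
Proof.
  intros Hu Hc. unfold powsum.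
  apply (derivable_pt_lim_ext (comp (fun z => Rpower z e) (fun u => Rpower u p + c)));
    [reflexivity |].
  eapply derivable_pt_lim_eq.
  - apply derivable_pt_lim_comp.
    + apply (derivable_pt_lim_plus (fun u => Rpower u p) (fct_cte c));
        [apply derivable_pt_lim_power, Hu | apply derivable_pt_lim_const].
    + apply derivable_pt_lim_power. pose proof (Rpower_pos u p); lra.
  - unfold fct_cte; ring.
Qed.

Lemma powsum_le_power p c e u : e <= 0 -> 0 < u -> 0 <= c ->
  powsum p c e u <= Rpower u (p * e).
Proof.
  intros He Hu Hc. unfold powsum. rewrite <- Rpower_mult.
  apply Rpower_le_neg; [exact He |]. pose proof (Rpower_pos u p); lra.
Qed.

Definition powsum_d1 p K c u := K * p * (powsum p c (K - 1) u * Rpower u (p - 1)).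
Definition powsum_d2 p K c u :=
  K * (K - 1) * p * p * (powsum p c (K - 2) u * (Rpower u (p - 1) * Rpower u (p - 1)))
  + K * p * (p - 1) * (powsum p c (K - 1) u * Rpower u (p - 2)).

Lemma derivable_powsum_d0 p K c u : 0 < u -> 0 <= c ->
  derivable_pt_lim (powsum p c K) u (powsum_d1 p K c u).
Proof.
  intros Hu Hc. eapply derivable_pt_lim_eq; [apply derivable_powsum; assumption |].
  unfold powsum_d1; ring.
Qed.

Lemma derivable_powsum_d1 p K c u : 0 < u -> 0 <= c ->
  derivable_pt_lim (powsum_d1 p K c) u (powsum_d2 p K c u).
Proof.
  intros Hu Hc. unfold powsum_d1.
  apply (derivable_pt_lim_ext
           (mult_real_fct (K * p) (powsum p c (K - 1) * (fun u => Rpower u (p - 1)))%F));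
    [intros; reflexivity |].
  eapply derivable_pt_lim_eq.
  - apply derivable_pt_lim_scal, derivable_pt_lim_mult;
      [apply derivable_powsum | apply derivable_pt_lim_power]; assumption.
  - unfold powsum_d2, powsum, mult_fct.
    replace (K - 1 - 1) with (K - 2) by ring. replace (p - 1 - 1) with (p - 2) by ring. ring.
Qed.

Section PowsumBounds.
Variables p K c : R.
Hypothesis Hp : 0 < p <= 1.
Hypothesis HK : 0 < K <= 1.
Hypothesis HpK : p * K = 1/2.
Hypothesis Hc : 0 <= c.

(* |d/du (u^p + c)^K| <= u^(-1/2) / 2: the exponents combine to pK - 1 = -1/2. *)
Lemma powsum_d1_bound u : 0 < u -> Rabs (powsum_d1 p K c u) <= / 2 * Rpower u (- (1/2)).
Proof.
  intros Hu. unfold powsum_d1.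
  pose proof (powsum_le_power p c (K - 1) u ltac:(lra) Hu Hc) as Hle.
  pose proof (Rpower_pos (Rpower u p + c) (K - 1)). pose proof (Rpower_pos u (p - 1)).
  assert (Hprod : Rpower u (p * (K - 1)) * Rpower u (p - 1) = Rpower u (- (1/2))).
  { rewrite <- Rpower_plus; f_equal; nra. }
  unfold powsum in *.
  rewrite Rabs_right by (apply Rle_ge, Rmult_le_pos; nra).
  replace (/ 2) with (K * p) by lra. apply Rmult_le_compat_l; [nra |].
  rewrite <- Hprod. apply Rmult_le_compat_r; lra.
Qed.

Lemma powsum_d2_bound u : 0 < u -> Rabs (powsum_d2 p K c u) <= 2 * Rpower u (- (3/2)).
Proof.
  intros Hu. unfold powsum_d2.
  set (X := powsum p c (K - 2) u * (Rpower u (p - 1) * Rpower u (p - 1))).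
  set (Y := powsum p c (K - 1) u * Rpower u (p - 2)).
  assert (HX : 0 <= X <= Rpower u (- (3/2))).
  { pose proof (powsum_le_power p c (K - 2) u ltac:(lra) Hu Hc).
    unfold X, powsum in *.
    pose proof (Rpower_pos (Rpower u p + c) (K - 2)). pose proof (Rpower_pos u (p - 1)).
    split; [nra |].
    replace (Rpower u (- (3/2)))
      with (Rpower u (p * (K - 2)) * (Rpower u (p - 1) * Rpower u (p - 1)))
      by (rewrite <- !Rpower_plus; f_equal; nra).
    apply Rmult_le_compat_r; nra. }
  assert (HY : 0 <= Y <= Rpower u (- (3/2))).
  { pose proof (powsum_le_power p c (K - 1) u ltac:(lra) Hu Hc).
    unfold Y, powsum in *.
    pose proof (Rpower_pos (Rpower u p + c) (K - 1)). pose proof (Rpower_pos u (p - 2)).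
    split; [nra |].
    replace (Rpower u (- (3/2))) with (Rpower u (p * (K - 1)) * Rpower u (p - 2))
      by (rewrite <- Rpower_plus; f_equal; nra).
    apply Rmult_le_compat_r; lra. }
  eapply Rle_trans; [apply Rabs_triang |].
  rewrite (Rabs_mult _ X), (Rabs_mult _ Y), (Rabs_right X), (Rabs_right Y) by lra.
  assert (H1 : Rabs (K * (K - 1) * p * p) <= 1) by (rewrite Rabs_left1; nra).
  assert (H2 : Rabs (K * p * (p - 1)) <= 1) by (rewrite Rabs_left1; nra).
  pose proof (Rmult_le_compat _ _ _ _ (Rabs_pos (K * (K - 1) * p * p)) (proj1 HX) H1 (proj2 HX)).
  pose proof (Rmult_le_compat _ _ _ _ (Rabs_pos (K * p * (p - 1))) (proj1 HY) H2 (proj2 HY)).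
  lra.
Qed.

Lemma powsum_first_diff a b : 0 < a <= b ->
  Rabs (powsum p c K b - powsum p c K a) <= / 2 * Rpower a (- (1/2)) * (b - a).
Proof.
  intros Hab. apply (first_diff_power_bound _ (powsum_d1 p K c)); [exact Hab | lra | |].
  - intros; apply derivable_powsum_d0; lra.
  - intros; apply powsum_d1_bound; lra.
Qed.

Lemma powsum_second_diff r s : 0 < s < r ->
  Rabs (powsum p c K (r + s) - 2 * powsum p c K r + powsum p c K (r - s))
    <= 4 * Rpower (r - s) (- (3/2)) * s ^ 2.
Proof.
  intros Hrs. replace 4 with (2 * 2) by ring.
  apply (second_diff_power_bound _ (powsum_d1 p K c) (powsum_d2 p K c)); [exact Hrs | lra | | |].
  - intros; apply derivable_powsum_d0; lra.
  - intros; apply derivable_powsum_d1; lra.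
  - intros; apply powsum_d2_bound; lra.
Qed.

End PowsumBounds.

(** * The mixed derivative of (x^p + y^p)^K *)

Definition mixed_d p K x y :=
  K * (K - 1) * p * p *
  (Rpower (Rpower x p + Rpower y p) (K - 2) * Rpower x (p - 1) * Rpower y (p - 1)).

Lemma derivable_mixed_x p K x y : 0 < x ->
  derivable_pt_lim (fun x => Rpower (Rpower x p + Rpower y p) K) x
    (powsum_d1 p K (Rpower y p) x).
Proof. intros Hx; apply derivable_powsum_d0; [exact Hx | left; apply Rpower_pos]. Qed.

Lemma derivable_mixed_y p K x y : 0 < y ->
  derivable_pt_lim (fun y => powsum_d1 p K (Rpower y p) x) y (mixed_d p K x y).
Proof.
  intros Hy. unfold powsum_d1.
  apply (derivable_pt_lim_ext
           (fun y => K * p * powsum p (Rpower x p) (K - 1) y * Rpower x (p - 1))).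
  { intros z; unfold powsum; rewrite (Rplus_comm (Rpower z p)); ring. }
  eapply derivable_pt_lim_eq.
  - apply derivable_pt_lim_scal_right.
    apply (derivable_pt_lim_ext (mult_real_fct (K * p) (powsum p (Rpower x p) (K - 1))));
      [intros; reflexivity |].
    apply derivable_pt_lim_scal, derivable_powsum; [exact Hy | left; apply Rpower_pos].
  - unfold mixed_d, powsum. rewrite (Rplus_comm (Rpower y p)).
    replace (K - 1 - 1) with (K - 2) by ring. ring.
Qed.

Section MixedBound.
Variables p K : R.
Hypothesis Hp : 0 < p <= 1.
Hypothesis HK : 0 < K <= 1.
Hypothesis HpK : p * K = 1/2.

Lemma mixed_factor_bound x y a b : 0 < b <= x -> 0 < a <= y ->
  Rpower (Rpower x p + Rpower y p) (K - 2) * Rpower x (p - 1) * Rpower y (p - 1)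
    <= Rpower b (- (1/2) - p) * Rpower a (p - 1).
Proof.
  intros Hbx Hay.
  pose proof (powsum_le_power p (Rpower y p) (K - 2) x ltac:(lra) ltac:(lra)
                ltac:(left; apply Rpower_pos)) as Hsum.
  unfold powsum in Hsum.
  assert (Hx : Rpower (Rpower x p + Rpower y p) (K - 2) * Rpower x (p - 1)
                 <= Rpower b (- (1/2) - p)).
  { apply Rle_trans with (Rpower x (p * (K - 2)) * Rpower x (p - 1)).
    - apply Rmult_le_compat_r; [left; apply Rpower_pos | exact Hsum].
    - rewrite <- Rpower_plus. replace (p * (K - 2) + (p - 1)) with (- (1/2) - p) by nra.
      apply Rpower_le_neg; lra. }
  pose proof (Rpower_le_neg a y (p - 1) ltac:(lra) Hay).
  apply Rmult_le_compat; [| left; apply Rpower_pos | exact Hx | assumption].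
  pose proof (Rpower_pos (Rpower x p + Rpower y p) (K - 2)).
  pose proof (Rpower_pos x (p - 1)). nra.
Qed.

Lemma mixed_d_bound x y a b : 0 < a <= x -> a <= y -> 0 < b <= Rmax x y ->
  Rabs (mixed_d p K x y) <= K * (1 - K) * p ^ 2 * (Rpower b (- (1/2) - p) * Rpower a (p - 1)).
Proof.
  intros Hax Hay Hb. unfold mixed_d.
  replace (K * (K - 1) * p * p) with (- (K * (1 - K) * p ^ 2)) by ring.
  pose proof (Rpower_pos (Rpower x p + Rpower y p) (K - 2)).
  pose proof (Rpower_pos x (p - 1)). pose proof (Rpower_pos y (p - 1)).
  rewrite Rabs_mult, Rabs_Ropp, (Rabs_right (K * (1 - K) * p ^ 2)) by (apply Rle_ge; nra).
  rewrite Rabs_right by (apply Rle_ge; repeat apply Rmult_le_pos; lra).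
  apply Rmult_le_compat_l; [nra |].
  unfold Rmax in Hb. destruct (Rle_dec x y).
  - replace (Rpower (Rpower x p + Rpower y p) (K - 2) * Rpower x (p - 1) * Rpower y (p - 1))
      with (Rpower (Rpower y p + Rpower x p) (K - 2) * Rpower y (p - 1) * Rpower x (p - 1))
      by (rewrite Rplus_comm; ring).
    apply mixed_factor_bound; lra.
  - apply mixed_factor_bound; lra.
Qed.

End MixedBound.

(** * The square root of |z| *)

Definition sqrt_abs z := rpow (Rabs z) (1/2).

Lemma sqrt_abs_even z : sqrt_abs (- z) = sqrt_abs z.
Proof. unfold sqrt_abs; rewrite Rabs_Ropp; reflexivity. Qed.

Lemma sqrt_abs_pos_eq z : 0 < z -> sqrt_abs z = Rpower z (1/2).
Proof. intros Hz; unfold sqrt_abs; rewrite Rabs_right, rpow_pos_eq; lra. Qed.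

Lemma derivable_sqrt_d1 u : 0 < u ->
  derivable_pt_lim (fun z => / 2 * Rpower z (- (1/2))) u (- / 4 * Rpower u (- (3/2))).
Proof.
  intros Hu. apply (derivable_pt_lim_ext (mult_real_fct (/ 2) (fun z => Rpower z (- (1/2)))));
    [intros; reflexivity |].
  eapply derivable_pt_lim_eq; [apply derivable_pt_lim_scal, derivable_pt_lim_power, Hu |].
  replace (- (1/2) - 1) with (- (3/2)) by lra. field.
Qed.

Lemma derivable_sqrt u : 0 < u ->
  derivable_pt_lim (fun z => Rpower z (1/2)) u (/ 2 * Rpower u (- (1/2))).
Proof.
  intros Hu. eapply derivable_pt_lim_eq; [apply derivable_pt_lim_power, Hu |].
  replace (1/2 - 1) with (- (1/2)) by lra. field.
Qed.

Lemma Rpower_two_half : Rpower 2 (1/2) <= 2.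
Proof.
  eapply Rle_trans; [apply (Rle_Rpower 2 (1/2) 1); lra | rewrite Rpower_1; lra].
Qed.

Lemma Rpower_two_three_halves : Rpower 2 (3/2) <= 4.
Proof.
  replace 4 with (Rpower 2 (1 + 1)) by (rewrite Rpower_plus, Rpower_1 by lra; ring).
  apply Rle_Rpower; lra.
Qed.

Lemma sqrt_first_diff a b : 0 < a <= b ->
  Rabs (Rpower b (1/2) - Rpower a (1/2)) <= / 2 * Rpower a (- (1/2)) * (b - a).
Proof.
  intros Hab.
  apply (first_diff_power_bound (fun z => Rpower z (1/2)) (fun z => / 2 * Rpower z (- (1/2))));
    [exact Hab | lra | intros; apply derivable_sqrt; lra |].
  intros c Hc. rewrite Rabs_right; [lra |].
  apply Rle_ge; left; apply Rmult_lt_0_compat; [lra | apply Rpower_pos].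
Qed.

Lemma sqrt_sym_diff y s : 0 < s -> 2 * s <= y ->
  Rabs (Rpower (y + s) (1/2) - Rpower (y - s) (1/2)) <= 2 * s * Rpower y (- (1/2)).
Proof.
  intros Hs Hy. eapply Rle_trans; [apply sqrt_first_diff; lra |].
  pose proof (Rpower_half_bound (- (1/2)) y (y - s) ltac:(lra) ltac:(lra) ltac:(lra)) as Hhalf.
  rewrite Ropp_involutive in Hhalf.
  assert (Hle : Rpower (y - s) (- (1/2)) <= 2 * Rpower y (- (1/2))).
  { eapply Rle_trans; [exact Hhalf |].
    apply Rmult_le_compat_r; [left; apply Rpower_pos | apply Rpower_two_half]. }
  pose proof (Rpower_pos (y - s) (- (1/2))).
  replace (y + s - (y - s)) with (2 * s) by ring. nra.
Qed.

Lemma sqrt_second_diff y s : 0 < s -> 2 * s <= y ->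
  Rabs (Rpower (y + s) (1/2) - 2 * Rpower y (1/2) + Rpower (y - s) (1/2))
    <= 2 * s ^ 2 * Rpower y (- (3/2)).
Proof.
  intros Hs Hy.
  pose proof (second_diff_power_bound (fun z => Rpower z (1/2)) (fun z => / 2 * Rpower z (- (1/2)))
                (fun z => - / 4 * Rpower z (- (3/2))) y s (/ 4) (- (3/2))
                ltac:(lra) ltac:(lra)) as Hd.
  eapply Rle_trans.
  - apply Hd; intros c Hc; [apply derivable_sqrt | apply derivable_sqrt_d1 |]; try lra.
    rewrite Rabs_left1 by (pose proof (Rpower_pos c (- (3/2))); nra). lra.
  - pose proof (Rpower_half_bound (- (3/2)) y (y - s) ltac:(lra) ltac:(lra) ltac:(lra)) as Hhalf.
    rewrite Ropp_involutive in Hhalf.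
    assert (Hle : Rpower (y - s) (- (3/2)) <= 4 * Rpower y (- (3/2))).
    { eapply Rle_trans; [exact Hhalf |].
      apply Rmult_le_compat_r; [left; apply Rpower_pos | apply Rpower_two_three_halves]. }
    assert (0 <= s ^ 2) by nra. nra.
Qed.

Lemma sqrt_abs_sym_diff z s : 0 < s -> 2 * s <= Rabs z ->
  Rabs (sqrt_abs (z + s) - sqrt_abs (z - s)) <= 2 * s * Rpower (Rabs z) (- (1/2)).
Proof.
  intros Hs Hz. destruct (Rle_dec 0 z).
  - rewrite (Rabs_right z) in * by lra. rewrite !sqrt_abs_pos_eq by lra. apply sqrt_sym_diff; lra.
  - rewrite (Rabs_left z) in * by lra.
    rewrite <- (sqrt_abs_even (z + s)), <- (sqrt_abs_even (z - s)), Rabs_minus_sym.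
    replace (- (z + s)) with (- z - s) by ring. replace (- (z - s)) with (- z + s) by ring.
    rewrite !sqrt_abs_pos_eq by lra. apply sqrt_sym_diff; lra.
Qed.

Lemma sqrt_abs_second_diff z s : 0 < s -> 2 * s <= Rabs z ->
  Rabs (sqrt_abs (z + s) - 2 * sqrt_abs z + sqrt_abs (z - s))
    <= 2 * s ^ 2 * Rpower (Rabs z) (- (3/2)).
Proof.
  intros Hs Hz. destruct (Rle_dec 0 z).
  - rewrite (Rabs_right z) in * by lra. rewrite !sqrt_abs_pos_eq by lra.
    apply sqrt_second_diff; lra.
  - rewrite (Rabs_left z) in * by lra.
    rewrite <- (sqrt_abs_even (z + s)), <- (sqrt_abs_even z), <- (sqrt_abs_even (z - s)).
    replace (- (z + s)) with (- z - s) by ring. replace (- (z - s)) with (- z + s) by ring.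
    rewrite !sqrt_abs_pos_eq by lra.
    replace (Rpower (- z - s) (1/2) - 2 * Rpower (- z) (1/2) + Rpower (- z + s) (1/2))
      with (Rpower (- z + s) (1/2) - 2 * Rpower (- z) (1/2) + Rpower (- z - s) (1/2)) by ring.
    apply sqrt_second_diff; lra.
Qed.

Lemma Rabs_sub_triang a b : Rabs (a - b) <= Rabs a + Rabs b.
Proof. unfold Rminus; rewrite <- (Rabs_Ropp b); apply Rabs_triang. Qed.

Lemma Rabs_scaled_diff c a b : 0 < c <= 1 -> Rabs (c * (a - b)) <= Rabs a + Rabs b.
Proof.
  intros Hc. rewrite Rabs_mult, (Rabs_right c) by lra.
  pose proof (Rabs_sub_triang a b). pose proof (Rabs_pos (a - b)). nra.
Qed.

Definition gcov p K x y := rpow (rpow x p + rpow y p) K.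

(* The "difference" part |x - y|^(2HK), a square root when 2HK = 1/2. *)
Definition dcov x y := sqrt_abs (x - y).

Lemma bfbm_cov_split H K : 2 * H * K = 1/2 ->
  bfbm_cov H K = fun x y => Rpower 2 (- K) * (gcov (2 * H) K x y - dcov x y).
Proof. intros E; unfold bfbm_cov, gcov, dcov, sqrt_abs; rewrite E; reflexivity. Qed.

Lemma bfbm_scale_bounds K : 0 < K -> 0 < Rpower 2 (- K) <= 1.
Proof.
  intros HK; split; [apply Rpower_pos |].
  rewrite <- (Rpower_O 2) by lra. apply Rle_Rpower; lra.
Qed.

Section Linearity.
Variables (c : R) (F G : R -> R -> R).
Let Rc := fun x y => c * (F x y - G x y).

Lemma incr_cov_split s t r : incr_cov Rc s t r = c * (incr_cov F s t r - incr_cov G s t r).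
Proof. unfold incr_cov, Rc; ring. Qed.

Lemma second_diff_cov_split s t r :
  second_diff_cov Rc s t r = c * (second_diff_cov F s t r - second_diff_cov G s t r).
Proof. unfold second_diff_cov, Rc; ring. Qed.

Lemma sym_diff_cov_split s u t :
  sym_diff_cov Rc s u t = c * (sym_diff_cov F s u t - sym_diff_cov G s u t).
Proof. unfold sym_diff_cov, Rc; ring. Qed.

Lemma back_diff_cov_split s u t :
  back_diff_cov Rc s u t = c * (back_diff_cov F s u t - back_diff_cov G s u t).
Proof. unfold back_diff_cov, Rc; ring. Qed.

End Linearity.

Section GcovBounds.
Variables p K : R.
Hypothesis Hp : 0 < p <= 1.
Hypothesis HK : 0 < K <= 1.
Hypothesis HpK : p * K = 1/2.

Lemma gcov_powsum x y : 0 < y -> gcov p K x y = powsum p (rpow x p) K y.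
Proof.
  intros Hy. unfold gcov, powsum.
  pose proof (rpow_nonneg x p). pose proof (Rpower_pos y p).
  rewrite (rpow_pos_eq y), rpow_pos_eq by lra. f_equal; ring.
Qed.

Lemma gcov_Rpower x y : 0 < x -> 0 < y ->
  gcov p K x y = Rpower (Rpower x p + Rpower y p) K.
Proof.
  intros Hx Hy. rewrite gcov_powsum, (rpow_pos_eq x) by lra. unfold powsum; f_equal; ring.
Qed.

(* G(x, .) is nondecreasing and 1/2-Hoelder, since pK = 1/2. *)
Lemma gcov_holder x a b : 0 <= b <= a ->
  0 <= gcov p K x a - gcov p K x b <= rpow (a - b) (1/2).
Proof.
  intros Hb. unfold gcov.
  pose proof (rpow_nonneg x p). pose proof (rpow_nonneg b p).
  pose proof (rpow_le_pos p b a ltac:(lra) ltac:(lra)) as Hba.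
  split.
  - pose proof (rpow_le_pos K (rpow x p + rpow b p) (rpow x p + rpow a p)
                  ltac:(lra) ltac:(lra)); lra.
  - assert (Hinc : rpow a p - rpow b p <= rpow (a - b) p).
    { pose proof (rpow_holder p a b Hp ltac:(lra) ltac:(lra)) as Hh.
      rewrite Rabs_right in Hh by lra. rewrite (Rabs_right (a - b)) in Hh by lra. exact Hh. }
    pose proof (rpow_subadditive K (rpow x p + rpow b p) (rpow a p - rpow b p)
                  HK ltac:(lra) ltac:(lra)) as Hsub.
    replace (rpow x p + rpow b p + (rpow a p - rpow b p)) with (rpow x p + rpow a p) in Hsub
      by ring.
    pose proof (rpow_le_pos K (rpow a p - rpow b p) (rpow (a - b) p) ltac:(lra) ltac:(lra))
      as Hmono.
    rewrite rpow_rpow, HpK in Hmono by lra. lra.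
Qed.

Lemma gcov_first_diff x a b : 0 < a <= b ->
  Rabs (gcov p K x b - gcov p K x a) <= / 2 * Rpower a (- (1/2)) * (b - a).
Proof.
  intros Hab. rewrite !gcov_powsum by lra.
  apply powsum_first_diff; first [assumption | apply rpow_nonneg].
Qed.

Lemma gcov_second_diff s t r : 0 < s < r ->
  Rabs (second_diff_cov (gcov p K) s t r) <= 4 * Rpower (r - s) (- (3/2)) * s ^ 2.
Proof.
  intros Hrs. unfold second_diff_cov. rewrite !gcov_powsum by lra.
  apply powsum_second_diff; first [assumption | apply rpow_nonneg].
Qed.

Lemma gcov_incr_bound s t r : 0 < s -> 2 * s <= r -> 2 * s <= t -> 2 * s <= Rabs (t - r) ->
  Rabs (incr_cov (gcov p K) s t r) <=
    K * (1 - K) * p ^ 2 * (Rpower (Rabs (t - r)) (- (1/2) - p) * Rpower (Rmin t r - s) (p - 1))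
    * s ^ 2.
Proof.
  intros Hs Hr Ht Htr. unfold incr_cov. rewrite !gcov_Rpower by lra.
  apply (mixed_diff_bound (fun x y => Rpower (Rpower x p + Rpower y p) K)
           (fun x y => powsum_d1 p K (Rpower y p) x) (mixed_d p K)); [exact Hs | | |].
  - intros x y Hx Hy. apply derivable_mixed_x; lra.
  - intros x y Hx Hy. apply derivable_mixed_y; lra.
  - intros x y Hx Hy. apply mixed_d_bound; [exact Hp | exact HK | exact HpK | ..];
      unfold Rmin, Rmax, Rabs in *; repeat destruct Rle_dec; repeat destruct Rcase_abs; lra.
Qed.

End GcovBounds.

Lemma dcov_holder x a b : b <= a -> Rabs (dcov x a - dcov x b) <= rpow (a - b) (1/2).
Proof.
  intros Hb. unfold dcov, sqrt_abs.
  eapply Rle_trans; [apply rpow_holder; (lra || apply Rabs_pos) |].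
  apply rpow_le_pos; [lra |]. split; [apply Rabs_pos |].
  eapply Rle_trans; [apply Rabs_triang_inv2 |].
  replace (x - a - (x - b)) with (- (a - b)) by ring. rewrite Rabs_Ropp, Rabs_right; lra.
Qed.

(* Differences of D reduce to differences of sqrt |.| at z = t - r. *)
Lemma dcov_incr_bound s t r : 0 < s -> 2 * s <= Rabs (t - r) ->
  Rabs (incr_cov dcov s t r) <= 2 * s ^ 2 * Rpower (Rabs (t - r)) (- (3/2)).
Proof.
  intros Hs Htr. unfold incr_cov, dcov.
  replace (t - (r - s)) with (t - r + s) by ring.
  replace (t - s - r) with (t - r - s) by ring.
  replace (t - s - (r - s)) with (t - r) by ring.
  rewrite <- Rabs_Ropp.
  replace (- (sqrt_abs (t - r) - sqrt_abs (t - r + s) - sqrt_abs (t - r - s) + sqrt_abs (t - r)))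
    with (sqrt_abs (t - r + s) - 2 * sqrt_abs (t - r) + sqrt_abs (t - r - s)) by ring.
  apply sqrt_abs_second_diff; assumption.
Qed.

Lemma dcov_second_diff s t r : 0 < s -> 2 * s <= Rabs (t - r) ->
  Rabs (second_diff_cov dcov s t r) <= 2 * s ^ 2 * Rpower (Rabs (t - r)) (- (3/2)).
Proof.
  intros Hs Htr. unfold second_diff_cov, dcov.
  replace (t - (r + s)) with (t - r - s) by ring.
  replace (t - (r - s)) with (t - r + s) by ring.
  replace (sqrt_abs (t - r - s) - 2 * sqrt_abs (t - r) + sqrt_abs (t - r + s))
    with (sqrt_abs (t - r + s) - 2 * sqrt_abs (t - r) + sqrt_abs (t - r - s)) by ring.
  apply sqrt_abs_second_diff; assumption.
Qed.

Lemma dcov_sym_diff s u t : 0 < s -> 2 * s <= Rabs (t - u) ->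
  Rabs (sym_diff_cov dcov s u t) <= 2 * s * Rpower (Rabs (t - u)) (- (1/2)).
Proof.
  intros Hs Htu. unfold sym_diff_cov, dcov.
  replace (u - (t + s)) with (u - t - s) by ring.
  replace (u - (t - s)) with (u - t + s) by ring.
  rewrite (Rabs_minus_sym (sqrt_abs (u - t - s))), (Rabs_minus_sym t u) in *.
  apply sqrt_abs_sym_diff; assumption.
Qed.

(** * The four conditions for the bifractional Brownian motion *)

Section Bifractional.
Variables H K : R.
Hypothesis HH : 0 < H <= 1/2.
Hypothesis HK : 0 < K <= 1.
Hypothesis HHK : 2 * H * K = 1/2.

Let Hp : 0 < 2 * H <= 1. Proof. lra. Qed.

Lemma cov_holder x a b : 0 <= b <= a ->
  Rabs (bfbm_cov H K x a - bfbm_cov H K x b) <= 2 * rpow (a - b) (1/2).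
Proof.
  intros Hb. rewrite bfbm_cov_split by exact HHK.
  replace (Rpower 2 (- K) * (gcov (2 * H) K x a - dcov x a)
           - Rpower 2 (- K) * (gcov (2 * H) K x b - dcov x b))
    with (Rpower 2 (- K) * ((gcov (2 * H) K x a - gcov (2 * H) K x b) - (dcov x a - dcov x b)))
    by ring.
  eapply Rle_trans; [apply Rabs_scaled_diff, bfbm_scale_bounds; lra |].
  pose proof (gcov_holder (2 * H) K Hp HK HHK x a b Hb).
  pose proof (dcov_holder x a b ltac:(lra)).
  rewrite Rabs_right by lra. lra.
Qed.

(* Away from the diagonal, the rectangular increment is controlled by the mixed
   derivative of G and the second derivative of the square root. *)
Lemma bfbm_incr_bound s t r : 0 < s -> 2 * s <= r -> 2 * s <= t -> 2 * s <= Rabs (t - r) ->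
  Rabs (incr_cov (bfbm_cov H K) s t r) <=
    K * (1 - K) * (2 * H) ^ 2
      * (Rpower (Rabs (t - r)) (- (1/2) - 2 * H) * Rpower (Rmin t r - s) (2 * H - 1)) * s ^ 2
    + 2 * s ^ 2 * Rpower (Rabs (t - r)) (- (3/2)).
Proof.
  intros Hs Hr Ht Htr. rewrite bfbm_cov_split, incr_cov_split by exact HHK.
  eapply Rle_trans; [apply Rabs_scaled_diff, bfbm_scale_bounds; lra |].
  apply Rplus_le_compat; [apply gcov_incr_bound | apply dcov_incr_bound]; assumption.
Qed.

Lemma cond_i_bfbm T : cond_i T (bfbm_cov H K).
Proof.
  exists 4. intros s t Hs Hst HtT. unfold incr_cov.
  pose proof (cov_holder t t (t - s) ltac:(lra)) as Ht.
  pose proof (cov_holder (t - s) t (t - s) ltac:(lra)) as Hts.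
  replace (t - (t - s)) with s in Ht, Hts by ring.
  pose proof (Rle_abs ((bfbm_cov H K t t - bfbm_cov H K t (t - s))
                       - (bfbm_cov H K (t - s) t - bfbm_cov H K (t - s) (t - s)))).
  pose proof (Rabs_sub_triang (bfbm_cov H K t t - bfbm_cov H K t (t - s))
                (bfbm_cov H K (t - s) t - bfbm_cov H K (t - s) (t - s))).
  lra.
Qed.

(* Condition (ii): alpha = 3/2 when K = 1 (G is then additive, so its mixed
   increment vanishes), and alpha = 1/2 + 2H, beta = 1 - 2H when K < 1. *)
Lemma cond_ii_bfbm T : cond_ii T (bfbm_cov H K).
Proof.
  destruct (Req_dec K 1) as [K1 | K1].
  - exists 2, (3/2). split; [lra |]. split; [lra |].
    intros beta s t r Hs Hr HrT Ht HtT Htr.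
    eapply Rle_trans; [apply bfbm_incr_bound; assumption |].
    rewrite K1, Rminus_diag, Rmult_0_r, !Rmult_0_l, Rplus_0_l.
    rewrite (rpow_pos_eq (Rabs (t - r))) by lra.
    assert (0 <= 2 * s ^ 2 * Rpower (Rabs (t - r)) (- (3/2)) * rpow (Rmin t r - s) (- beta)).
    { pose proof (pow2_ge_0 s). pose proof (Rpower_pos (Rabs (t - r)) (- (3/2))).
      pose proof (rpow_nonneg (Rmin t r - s) (- beta)).
      repeat apply Rmult_le_pos; lra. }
    lra.
  - assert (Hp2 : 1/2 < 2 * H) by nra.
    exists 2, (1/2 + 2 * H). split; [lra |]. split; [lra |].
    intros beta s t r Hs Hr HrT Ht HtT Htr.
    eapply Rle_trans; [apply bfbm_incr_bound; assumption |].
    assert (Hm : 0 < Rmin t r - s) by (unfold Rmin; destruct (Rle_dec t r); lra).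
    rewrite !(rpow_pos_eq (Rabs (t - r))), (rpow_pos_eq (Rmin t r - s)) by lra.
    unfold beta. replace (- (3/2 - (1/2 + 2 * H))) with (2 * H - 1) by lra.
    replace (- (1/2 + 2 * H)) with (- (1/2) - 2 * H) by lra.
    set (X := Rpower (Rabs (t - r)) (- (1/2) - 2 * H) * Rpower (Rmin t r - s) (2 * H - 1)).
    assert (HX : 0 < X) by (apply Rmult_lt_0_compat; apply Rpower_pos).
    assert (Hcoef : K * (1 - K) * (2 * H) ^ 2 <= 2) by nra.
    pose proof (pow2_ge_0 s).
    replace (2 * s ^ 2 * Rpower (Rabs (t - r)) (- (1/2) - 2 * H)
             * Rpower (Rmin t r - s) (2 * H - 1))
      with (2 * X * s ^ 2) by (unfold X; ring).
    apply Rplus_le_compat_r, Rmult_le_compat_r; [lra |]. apply Rmult_le_compat_r; lra.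
Qed.

(* Near the diagonal or the origin, every functional of conditions (iii) and (iv)
   is a sum of two increments of size s, each bounded by [cov_holder]. *)
Lemma cov_two_steps x a s : 0 < s -> s <= a ->
  Rabs (bfbm_cov H K x (a + s) - bfbm_cov H K x a) <= 2 * rpow s (1/2) /\
  Rabs (bfbm_cov H K x a - bfbm_cov H K x (a - s)) <= 2 * rpow s (1/2).
Proof.
  intros Hs Ha. split.
  - pose proof (cov_holder x (a + s) a ltac:(lra)) as Hup.
    replace (a + s - a) with s in Hup by ring. exact Hup.
  - pose proof (cov_holder x a (a - s) ltac:(lra)) as Hdown.
    replace (a - (a - s)) with s in Hdown by ring. exact Hdown.
Qed.

Lemma cond_iii_bfbm T : cond_iii T (bfbm_cov H K).
Proof.
  exists 4. intros t s r Ht HtT Hs Hsr HrT. split.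
  - intros _. unfold second_diff_cov.
    destruct (cov_two_steps t r s Hs Hsr) as [Hup Hdown].
    replace (bfbm_cov H K t (r + s) - 2 * bfbm_cov H K t r + bfbm_cov H K t (r - s))
      with ((bfbm_cov H K t (r + s) - bfbm_cov H K t r)
            - (bfbm_cov H K t r - bfbm_cov H K t (r - s))) by ring.
    eapply Rle_trans; [apply Rabs_sub_triang | lra].
  - intros [Hr Htr]. rewrite bfbm_cov_split, second_diff_cov_split by exact HHK.
    eapply Rle_trans; [apply Rabs_scaled_diff, bfbm_scale_bounds; lra |].
    pose proof (gcov_second_diff (2 * H) K Hp HK HHK s t r ltac:(lra)).
    pose proof (dcov_second_diff s t r Hs Htr).
    rewrite (rpow_pos_eq (r - s)), (rpow_pos_eq (Rabs (t - r))) by lra.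
    pose proof (Rpower_pos (r - s) (- (3/2))). pose proof (Rpower_pos (Rabs (t - r)) (- (3/2))).
    pose proof (pow2_ge_0 s). nra.
Qed.

Lemma bfbm_sym_diff_near s u t : 0 < s -> s <= t ->
  Rabs (sym_diff_cov (bfbm_cov H K) s u t) <= 4 * rpow s (1/2).
Proof.
  intros Hs Hst. unfold sym_diff_cov.
  destruct (cov_two_steps u t s Hs Hst) as [Hup Hdown].
  replace (bfbm_cov H K u (t + s) - bfbm_cov H K u (t - s))
    with ((bfbm_cov H K u (t + s) - bfbm_cov H K u t)
          + (bfbm_cov H K u t - bfbm_cov H K u (t - s))) by ring.
  eapply Rle_trans; [apply Rabs_triang | lra].
Qed.

(* Away from the origin, the G part of the symmetric increment is bounded by the mean
   value theorem; the D part is kept and estimated by the caller. *)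
Lemma bfbm_sym_diff_bound s u t : 0 < s -> 2 * s <= t ->
  Rabs (sym_diff_cov (bfbm_cov H K) s u t) <=
    s * Rpower (t - s) (- (1/2)) + Rabs (sym_diff_cov dcov s u t).
Proof.
  intros Hs Ht. rewrite bfbm_cov_split, sym_diff_cov_split by exact HHK.
  eapply Rle_trans; [apply Rabs_scaled_diff, bfbm_scale_bounds; lra |].
  apply Rplus_le_compat_r. unfold sym_diff_cov.
  eapply Rle_trans; [apply (gcov_first_diff (2 * H) K HK HHK); lra |].
  right; field.
Qed.

Lemma bfbm_back_diff_bound s t : 0 < s -> 2 * s < t ->
  Rabs (back_diff_cov (bfbm_cov H K) s s t)
    <= 4 * rpow s (1/2 + 1/2) * rpow (t - 2 * s) (- (1/2)).
Proof.
  intros Hs Ht. rewrite bfbm_cov_split, back_diff_cov_split by exact HHK.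
  eapply Rle_trans; [apply Rabs_scaled_diff, bfbm_scale_bounds; lra |].
  unfold back_diff_cov.
  pose proof (gcov_first_diff (2 * H) K HK HHK s (t - s) t ltac:(lra)) as HG.
  (* the square-root part is sqrt (t - s) - sqrt (t - 2s) *)
  assert (HD : Rabs (dcov s t - dcov s (t - s)) <= / 2 * Rpower (t - 2 * s) (- (1/2)) * s).
  { unfold dcov. rewrite <- (sqrt_abs_even (s - t)), <- (sqrt_abs_even (s - (t - s))).
    replace (- (s - t)) with (t - s) by ring. replace (- (s - (t - s))) with (t - 2 * s) by ring.
    rewrite !sqrt_abs_pos_eq by lra.
    replace (/ 2 * Rpower (t - 2 * s) (- (1/2)) * s)
      with (/ 2 * Rpower (t - 2 * s) (- (1/2)) * (t - s - (t - 2 * s))) by ring.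
    apply sqrt_first_diff; lra. }
  pose proof (Rpower_le_neg (t - 2 * s) (t - s) (- (1/2)) ltac:(lra) ltac:(lra)).
  replace (1/2 + 1/2) with 1 by lra.
  rewrite (rpow_pos_eq s 1), (rpow_pos_eq (t - 2 * s)), Rpower_1 by lra.
  replace (t - (t - s)) with s in HG by ring.
  pose proof (Rpower_pos (t - s) (- (1/2))). pose proof (Rpower_pos (t - 2 * s) (- (1/2))).
  nra.
Qed.

Lemma cond_iv_bfbm T : cond_iv T (bfbm_cov H K).
Proof.
  exists 4, (1/2). split; [lra |]. split; [| split].
  - intros s t Hs Hst HtT. split.
    + intros _. apply bfbm_sym_diff_near; assumption.
    + intros Ht. eapply Rle_trans; [apply bfbm_sym_diff_bound; lra |].
      (* seen from u = t the square-root part is even, so it cancels *)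
      assert (Hd : sym_diff_cov dcov s t t = 0).
      { unfold sym_diff_cov, dcov. replace (t - (t + s)) with (- s) by ring.
        replace (t - (t - s)) with s by ring. rewrite sqrt_abs_even; ring. }
      rewrite Hd, Rabs_R0, (rpow_pos_eq (t - s)) by lra.
      pose proof (Rpower_pos (t - s) (- (1/2))). nra.
  - intros s r t Hs Hsr HrT Hst HtT. split.
    + intros _. apply bfbm_sym_diff_near; assumption.
    + intros [Ht Htr]. eapply Rle_trans; [apply bfbm_sym_diff_bound; lra |].
      pose proof (dcov_sym_diff s r t Hs Htr).
      rewrite (rpow_pos_eq (t - s)), (rpow_pos_eq (Rabs (t - r))) by lra.
      pose proof (Rpower_pos (t - s) (- (1/2))). pose proof (Rpower_pos (Rabs (t - r)) (- (1/2))).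
      nra.
  - intros s t Hs Ht HtT. apply bfbm_back_diff_bound; assumption.
Qed.

End Bifractional.

Theorem proposition5p1 (H K : R) :
  0 < H -> H <= 1/2 -> 0 < K -> K <= 1 -> 2 * H * K = 1/2 ->
  forall T : R, 0 < T ->
    cond_i T (bfbm_cov H K) /\ cond_ii T (bfbm_cov H K) /\
    cond_iii T (bfbm_cov H K) /\ cond_iv T (bfbm_cov H K).
Proof.
  intros HH0 HH1 HK0 HK1 HHK T _.
  assert (HH : 0 < H <= 1/2) by lra. assert (HK : 0 < K <= 1) by lra.
  split; [| split; [| split]].
  - apply cond_i_bfbm; assumption.
  - apply cond_ii_bfbm; assumption.
  - apply cond_iii_bfbm; assumption.
  - apply cond_iv_bfbm; assumption.
Qed.
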